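(* Let $\tau\in\mathbb{R}\setminus\mathbb{Q}$ and let $\bar\varphi\in\mathbb{T}$, and put $\bar\varphi'=R_{1/2}\bar\varphi$. Then there exist a Cantor set $C\subset\mathbb{T}$ with $R_{1/2}C=C$ and a Cantor function $\mathcal{P}:\mathbb{T}\to\mathbb{T}$ associated to $C$ such that: (a) $\mathcal{P}(A)=\{\overline{\varphi+n\tau}: n\in\mathbb{Z}\}\cup\{\overline{\varphi'+n\tau}: n\in\mathbb{Z}\}$, where $A$ is the set of accessible points of $C$; (b) $\mathcal{P}$ is $\mathbb{Z}_2$-equivariant, i.e. $\mathcal{P}\circ R_{1/2}=R_{1/2}\circ\mathcal{P}$.
   Context: $\mathbb{T}=\mathbb{R}/\mathbb{Z}$ with points $\bar\theta=\theta+\mathbb{Z}$; the rotation $R_{\bar\eta}:\mathbb{T}\to\mathbb{T}$ is $R_{\bar\eta}(\bar\theta)=\overline{\theta+\eta}$ (written $R_\eta$ for $\eta\in\mathbb{R}$). A Cantor set is a compact, totally disconnected, perfect subset $C\subset\mathbb{T}$; it can be written $C=\mathbb{T}\setminus\bigcup_{k\ge0}\dot\alpha_k$ where $\{\alpha_k\}$ are pairwise disjoint closed arcs (the closures of the gaps) and $\dot\alpha_k$ their interiors. The accessible set $A$ of $C$ is the set of endpoints of all the arcs $\alpha_k$. Define $\bar\theta_1\sim\bar\theta_2$ if $\bar\theta_1=\bar\theta_2$ or both lie in the same $\alpha_k$. A Cantor function associated to $C$ is a continuous, cyclic-order-preserving (degree one, monotone) map $\mathcal{P}:\mathbb{T}\to\mathbb{T}$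 with $\mathcal{P}(\bar\theta_1)=\mathcal{P}(\bar\theta_2)$ if and only if $\bar\theta_1\sim\bar\theta_2$. A map $g:\mathbb{T}\to\mathbb{T}$ is $\mathbb{Z}_m$-equivariant if $g(\bar\theta+\tfrac1m)=g(\bar\theta)+\tfrac1m$ for all $\bar\theta\in\mathbb{T}$. *)

(* the circle T = R/Z is modelled by real representatives. *)
From Stdlib Require Import Reals ZArith.
Open Scope R_scope.

Definition eqT (x y : R) : Prop := exists k : Z, x - y = IZR k.

Definition distT (x y : R) : R :=
  Rabs (x - y - IZR (Int_part (x - y + /2))).

(* A subset of T is a 1-periodic predicate on R *)
Definition periodic (S : R -> Prop) : Prop := forall x, S x <-> S (x + 1).

Definition openT (U : R -> Prop) : Prop :=
  periodic U /\ forall x, U x -> exists e, e > 0 /\ forall y, Rabs (y - x) < e -> U y.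

Definition closedT (C : R -> Prop) : Prop :=
  periodic C /\
  forall x, (forall e, e > 0 -> exists y, C y /\ Rabs (x - y) < e) -> C x.

Definition connectedT (S : R -> Prop) : Prop :=
  forall U V : R -> Prop, openT U -> openT V ->
    (forall x, S x -> U x \/ V x) ->
    (forall x, S x -> U x -> V x -> False) ->
    (forall x, S x -> U x) \/ (forall x, S x -> V x).

Definition totally_disconnectedT (C : R -> Prop) : Prop :=
  forall S : R -> Prop, (forall x, S x -> C x) -> connectedT S ->
    forall x y, S x -> S y -> eqT x y.

Definition perfectT (C : R -> Prop) : Prop :=
  forall x, C x -> forall e, e > 0 -> exists y, C y /\ 0 < distT x y < e.

(* Cantor set: compact (= closed, T being compact), totally disconnected,
   perfect, nonempty subset of T *)
Definition cantor_set (C : R -> Prop) : Prop :=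
  closedT C /\ (exists x, C x) /\ totally_disconnectedT C /\ perfectT C.

Definition gap (C : R -> Prop) (a b : R) : Prop :=
  a < b < a + 1 /\ C a /\ C b /\ (forall x, a < x < b -> ~ C x).

Definition in_arc (a b x : R) : Prop := exists k : Z, a <= x + IZR k <= b.

Definition simC (C : R -> Prop) (x y : R) : Prop :=
  eqT x y \/ exists a b, gap C a b /\ in_arc a b x /\ in_arc a b y.

Definition accessible (C : R -> Prop) (x : R) : Prop :=
  exists a b, gap C a b /\ (eqT x a \/ eqT x b).

(* F : R -> R is a lift of a continuous, degree one, monotone (cyclic order
   preserving) circle map P, P(xbar) = (F x)bar *)
Definition monotone_degree_one_lift (F : R -> R) : Prop :=
  continuity F /\ (forall x y, x <= y -> F x <= F y) /\
  (forall x, F (x + 1) = F x + 1).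

Definition cantor_function (C : R -> Prop) (F : R -> R) : Prop :=
  monotone_degree_one_lift F /\ forall x y, eqT (F x) (F y) <-> simC C x y.

Definition irrational (t : R) : Prop :=
  ~ exists p q : Z, q <> 0%Z /\ t = IZR p / IZR q.

(* Rather than building the Cantor function directly, we build (the lift of)
   its inverse: a strictly increasing degree-one map of R that jumps by
   [2^-m / 8] at every point of [orbit m + Z/2], where [orbit] enumerates
   [phi + Z tau]:
       Hr y = y/2 + (1/8) sum_m 2^-m (stepR (orbit m) y + stepR (orbit m + 1/2) y),
   with [stepR d] the right-continuous unit staircase jumping on [d + Z]; its
   left-continuous twin [Hl] uses the staircase [stepL].  The Cantor set is the
   set of values of [Hr] and [Hl], the gaps are the jump intervals
   [Hl y, Hr y], and the Cantor function [F] is the generalised inverse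
   [F x = sup {y | Hr y <= x}].  Both staircase pairs are invariant under the
   half-turn, which gives the Z_2-equivariance; irrationality of [tau] makes
   the orbit dense, so jump intervals separate any two points of the set. *)

From Stdlib Require Import Reals ZArith Lra Lia.
From Stdlib Require Import Classical.
From Coquelicot Require Import Coquelicot.
Open Scope R_scope.

Lemma Int_part_bounds r : IZR (Int_part r) <= r < IZR (Int_part r) + 1.
Proof. destruct (base_Int_part r). lra. Qed.

Lemma Int_part_unique r z : IZR z <= r < IZR z + 1 -> Int_part r = z.
Proof. intros Hz. symmetry. apply Int_part_spec. lra. Qed.

Lemma IZR_lt_add1 a b : IZR a < IZR b + 1 -> (a <= b)%Z.
Proof.
  intros Hab. assert (Hlt : IZR a < IZR (b + 1)) by (rewrite plus_IZR; lra).
  apply lt_IZR in Hlt. lia.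
Qed.

Lemma Int_part_IZR k : Int_part (IZR k) = k.
Proof. apply Int_part_unique. lra. Qed.

Lemma Int_part_add_Z r k : Int_part (r + IZR k) = (Int_part r + k)%Z.
Proof.
  apply Int_part_unique. rewrite plus_IZR. pose proof (Int_part_bounds r). lra.
Qed.

Lemma Int_part_mono a b : a <= b -> (Int_part a <= Int_part b)%Z.
Proof.
  intros Hab. pose proof (Int_part_bounds a). pose proof (Int_part_bounds b).
  apply IZR_lt_add1. lra.
Qed.

Lemma Int_part_incr a b : a <= b < a + 1 -> (0 <= Int_part b - Int_part a <= 1)%Z.
Proof.
  intros Hab. pose proof (Int_part_mono a b ltac:(lra)).
  pose proof (Int_part_bounds a). pose proof (Int_part_bounds b).
  assert (Hlt : IZR (Int_part b) < IZR (Int_part a + 1) + 1) by (rewrite plus_IZR; lra).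
  apply IZR_lt_add1 in Hlt. lia.
Qed.

Lemma Int_part_opp_sum r : (-1 <= Int_part r + Int_part (-r) <= 0)%Z.
Proof.
  pose proof (Int_part_bounds r). pose proof (Int_part_bounds (-r)). split.
  - assert (Hlt : IZR (-1) < IZR (Int_part r + Int_part (-r)) + 1)
      by (rewrite plus_IZR; lra).
    apply IZR_lt_add1 in Hlt. lia.
  - assert (Hlt : IZR (Int_part r + Int_part (-r)) < IZR 0 + 1)
      by (rewrite plus_IZR; lra).
    apply IZR_lt_add1 in Hlt. lia.
Qed.

Lemma Int_part_opp_sum_zero r :
  (Int_part r + Int_part (-r) = 0)%Z -> r = IZR (Int_part r).
Proof.
  intros Hsum. pose proof (Int_part_bounds r). pose proof (Int_part_bounds (-r)) as Hopp.
  replace (Int_part (-r)) with (- Int_part r)%Z in Hopp by lia.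
  rewrite opp_IZR in Hopp. lra.
Qed.

Lemma integer_translate x y : exists k : Z, x <= y + IZR k < x + 1.
Proof.
  exists (- Int_part (y - x))%Z. rewrite opp_IZR.
  pose proof (Int_part_bounds (y - x)). lra.
Qed.

Lemma eqT_refl x : eqT x x.
Proof. exists 0%Z. simpl. lra. Qed.

Lemma eqT_sym x y : eqT x y -> eqT y x.
Proof. intros [k Hk]. exists (- k)%Z. rewrite opp_IZR. lra. Qed.

Lemma eqT_trans x y z : eqT x y -> eqT y z -> eqT x z.
Proof. intros [a Ha] [b Hb]. exists (a + b)%Z. rewrite plus_IZR. lra. Qed.

Lemma translate_Z (f : R -> R) :
  (forall y, f (y + 1) = f y + 1) -> forall k y, f (y + IZR k) = f y + IZR k.
Proof.
  intros Hf.
  assert (Hnat : forall n y, f (y + INR n) = f y + INR n).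
  { induction n as [|n IH]; intros y.
    - simpl. rewrite !Rplus_0_r. reflexivity.
    - rewrite S_INR. replace (y + (INR n + 1)) with (y + INR n + 1) by ring.
      rewrite Hf, IH. ring. }
  intros k y. destruct (Z_le_gt_dec 0 k).
  - replace k with (Z.of_nat (Z.to_nat k)) by lia. rewrite <- INR_IZR_INZ. apply Hnat.
  - replace k with (- Z.of_nat (Z.to_nat (- k)))%Z by lia.
    rewrite opp_IZR, <- INR_IZR_INZ.
    specialize (Hnat (Z.to_nat (- k)) (y + - INR (Z.to_nat (- k)))).
    replace (y + - INR (Z.to_nat (- k)) + INR (Z.to_nat (- k))) with y in Hnat by ring.
    lra.
Qed.

(* The two unit staircases with steps at the lattice [d + Z], normalised to
   vanish at 0: [stepR] is right-continuous (it counts the points of [d + Z]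
   in (0, y]) and [stepL] is left-continuous (it counts those in (0, y)). *)
Definition stepR (d y : R) : R := IZR (Int_part (y - d) - Int_part (- d)).
Definition stepL (d y : R) : R := IZR (- Int_part (d - y) - 1 - Int_part (- d)).

Lemma stepR_per1 d y : stepR d (y + 1) = stepR d y + 1.
Proof.
  unfold stepR. replace (y + 1 - d) with (y - d + IZR 1) by (simpl; lra).
  rewrite Int_part_add_Z, !minus_IZR, plus_IZR. simpl. lra.
Qed.

Lemma stepL_per1 d y : stepL d (y + 1) = stepL d y + 1.
Proof.
  unfold stepL. replace (d - (y + 1)) with (d - y + IZR (-1)) by (simpl; lra).
  rewrite Int_part_add_Z, !minus_IZR, !opp_IZR, plus_IZR. simpl. lra.
Qed.

(* The staircases at [d] and [d + 1/2] together count the lattice [d + Z/2],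
   which is invariant under the half-turn. *)
Lemma stepR_half d y :
  stepR d (y + /2) + stepR (d + /2) (y + /2) = stepR d y + stepR (d + /2) y + 1.
Proof.
  unfold stepR. replace (y + /2 - (d + /2)) with (y - d) by lra.
  replace (y + /2 - d) with (y - (d + /2) + IZR 1) by (simpl; lra).
  rewrite Int_part_add_Z, !minus_IZR, plus_IZR. simpl. lra.
Qed.

Lemma stepL_half d y :
  stepL d (y + /2) + stepL (d + /2) (y + /2) = stepL d y + stepL (d + /2) y + 1.
Proof.
  unfold stepL. replace (d + /2 - (y + /2)) with (d - y) by lra.
  replace (d - (y + /2)) with (d + /2 - y + IZR (-1)) by (simpl; lra).
  rewrite Int_part_add_Z, !minus_IZR, !opp_IZR, plus_IZR. simpl. lra.
Qed.

Lemma stepR_bounds d y : y - 1 < stepR d y < y + 1.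
Proof.
  unfold stepR. rewrite minus_IZR.
  pose proof (Int_part_bounds (y - d)). pose proof (Int_part_bounds (- d)). lra.
Qed.

Lemma stepL_le_stepR d y : stepL d y <= stepR d y <= stepL d y + 1.
Proof.
  unfold stepR, stepL. pose proof (Int_part_opp_sum (y - d)) as Hsum.
  replace (- (y - d)) with (d - y) in Hsum by lra.
  assert (Hle1 : IZR (- Int_part (d - y) - 1 - Int_part (- d))
                 <= IZR (Int_part (y - d) - Int_part (- d))) by (apply IZR_le; lia).
  assert (Hle2 : IZR (Int_part (y - d) - Int_part (- d))
                 <= IZR (- Int_part (d - y) - 1 - Int_part (- d) + 1)) by (apply IZR_le; lia).
  rewrite plus_IZR in Hle2. lra.
Qed.

Lemma stepR_le_stepL d y z : y < z -> stepR d y <= stepL d z.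
Proof.
  intros Hyz. unfold stepR, stepL. apply IZR_le.
  pose proof (Int_part_bounds (y - d)). pose proof (Int_part_bounds (d - z)).
  assert (Hlt : IZR (Int_part (y - d) + Int_part (d - z)) < IZR (-1) + 1)
    by (rewrite plus_IZR; simpl; lra).
  apply IZR_lt_add1 in Hlt. lia.
Qed.

Lemma stepR_eq_stepL d y : ~ eqT y d -> stepR d y = stepL d y.
Proof.
  intros Hy. unfold stepR, stepL. f_equal.
  pose proof (Int_part_opp_sum (y - d)) as Hsum.
  replace (- (y - d)) with (d - y) in Hsum by lra.
  destruct (Z.eq_dec (Int_part (y - d) + Int_part (d - y)) 0) as [Hz|Hz].
  - exfalso. apply Hy. exists (Int_part (y - d)). apply Int_part_opp_sum_zero.
    replace (- (y - d)) with (d - y) by lra. exact Hz.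
  - lia.
Qed.

Lemma stepR_jump d y : eqT y d -> stepR d y = stepL d y + 1.
Proof.
  intros [k Hk]. unfold stepR, stepL.
  replace (d - y) with (IZR (- k)) by (rewrite opp_IZR; lra).
  rewrite Hk, !Int_part_IZR, <- (plus_IZR _ 1). f_equal. lia.
Qed.

Lemma stepR_right_const d y :
  exists delta, 0 < delta /\ forall z, y <= z < y + delta -> stepR d z = stepR d y.
Proof.
  pose proof (Int_part_bounds (y - d)).
  exists (IZR (Int_part (y - d)) + 1 - (y - d)). split; [lra|].
  intros z Hz. unfold stepR. rewrite (Int_part_unique (z - d) (Int_part (y - d))); lra.
Qed.

Lemma stepL_left_const d y :
  exists delta, 0 < delta /\ forall z, y - delta < z <= y -> stepL d z = stepL d y.
Proof.
  pose proof (Int_part_bounds (d - y)).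
  exists (IZR (Int_part (d - y)) + 1 - (d - y)). split; [lra|].
  intros z Hz. unfold stepL. rewrite (Int_part_unique (d - z) (Int_part (d - y))); lra.
Qed.

Lemma stepR_incr d y z : y <= z < y + 1 -> 0 <= stepR d z - stepR d y <= 1.
Proof.
  intros Hyz. unfold stepR. rewrite <- minus_IZR.
  pose proof (Int_part_incr (y - d) (z - d) ltac:(lra)).
  split; [apply (IZR_le 0) | apply (IZR_le _ 1)]; lia.
Qed.

Lemma stepL_incr d y z : z <= y < z + 1 -> 0 <= stepL d y - stepL d z <= 1.
Proof.
  intros Hyz. unfold stepL. rewrite <- minus_IZR.
  pose proof (Int_part_incr (d - y) (d - z) ltac:(lra)).
  split; [apply (IZR_le 0) | apply (IZR_le _ 1)]; lia.
Qed.

Definition bounded_seq (c : nat -> R) : Prop := exists K, forall m, Rabs (c m) <= K.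
Definition wsum (c : nat -> R) : R := Series (fun m => (/2) ^ m * c m).

Lemma half_pow_pos m : 0 < (/2) ^ m.
Proof. apply pow_lt. lra. Qed.

Lemma bounded_const K : bounded_seq (fun _ => K).
Proof. exists (Rabs K). intros; lra. Qed.

Lemma bounded_between c lo hi : (forall m, lo <= c m <= hi) -> bounded_seq c.
Proof.
  intros Hc. exists (Rabs lo + Rabs hi). intros m. specialize (Hc m).
  apply Rabs_le. split.
  - pose proof (Rle_abs (- lo)). rewrite Rabs_Ropp in *. pose proof (Rabs_pos hi). lra.
  - pose proof (Rle_abs hi). pose proof (Rabs_pos lo). lra.
Qed.

Lemma bounded_minus c d : bounded_seq c -> bounded_seq d -> bounded_seq (fun m => c m - d m).
Proof.
  intros [K1 H1] [K2 H2]. exists (K1 + K2). intros m.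
  eapply Rle_trans; [apply Rabs_triang|]. rewrite Rabs_Ropp.
  specialize (H1 m). specialize (H2 m). lra.
Qed.

Lemma bounded_shift c : bounded_seq c -> bounded_seq (fun k => c (S k)).
Proof. intros [K HK]. exists K. auto. Qed.

Lemma wsum_ex c : bounded_seq c -> ex_series (fun m => (/2) ^ m * c m).
Proof.
  intros [K HK].
  apply (@ex_series_le R_AbsRing R_CompleteNormedModule _ (fun m => K * (/2) ^ m)).
  - intros n. change (norm ((/2) ^ n * c n)) with (Rabs ((/2) ^ n * c n)).
    rewrite Rabs_mult, Rabs_right by (left; apply half_pow_pos).
    pose proof (half_pow_pos n). specialize (HK n). nra.
  - apply (ex_series_scal_l K (fun m => (/2) ^ m)).
    apply ex_series_geom. rewrite Rabs_right; lra.
Qed.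

Lemma wsum_ext c d : (forall m, c m = d m) -> wsum c = wsum d.
Proof. intros Hcd. unfold wsum. apply Series_ext. intros m. rewrite Hcd. reflexivity. Qed.

Lemma wsum_const K : wsum (fun _ => K) = 2 * K.
Proof.
  unfold wsum. rewrite (Series_ext _ (fun m => K * (/2) ^ m)) by (intros; ring).
  rewrite (Series_scal_l K (fun m => (/2) ^ m)).
  assert (Habs : Rabs (/2) < 1) by (rewrite Rabs_right; lra).
  rewrite (is_series_unique _ _ (is_series_geom _ Habs)). field.
Qed.

Lemma wsum_plus c d : bounded_seq c -> bounded_seq d -> wsum c + wsum d = wsum (fun m => c m + d m).
Proof.
  intros Hc Hd. unfold wsum. rewrite <- Series_plus by (apply wsum_ex; auto).
  apply Series_ext. intros; ring.
Qed.

Lemma wsum_minus c d : bounded_seq c -> bounded_seq d -> wsum c - wsum d = wsum (fun m => c m - d m).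
Proof.
  intros Hc Hd. unfold wsum. rewrite <- Series_minus by (apply wsum_ex; auto).
  apply Series_ext. intros; ring.
Qed.

Lemma wsum_nonneg c : bounded_seq c -> (forall m, 0 <= c m) -> 0 <= wsum c.
Proof.
  intros Hc Hpos. replace 0 with (wsum (fun _ => 0)) by (rewrite wsum_const; ring).
  unfold wsum. apply Series_le; [|apply wsum_ex; auto].
  intros n. pose proof (half_pow_pos n). specialize (Hpos n). nra.
Qed.

Lemma wsum_le c d : bounded_seq c -> bounded_seq d -> (forall m, c m <= d m) -> wsum c <= wsum d.
Proof.
  intros Hc Hd Hcd. cut (0 <= wsum d - wsum c); [lra|].
  rewrite wsum_minus by auto. apply wsum_nonneg; [apply bounded_minus; auto|].
  intros m. specialize (Hcd m). lra.
Qed.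

Lemma wsum_shift c : bounded_seq c -> wsum c = c 0%nat + /2 * wsum (fun k => c (S k)).
Proof.
  intros Hc. unfold wsum. rewrite Series_incr_1 by (apply wsum_ex; auto).
  rewrite <- Series_scal_l. simpl. f_equal; [ring|].
  apply Series_ext. intros; simpl; ring.
Qed.

Lemma wsum_tail N : forall c K, (forall m, 0 <= c m <= K) ->
  (forall m, (m < N)%nat -> c m = 0) -> wsum c <= 2 * K * (/2) ^ N.
Proof.
  induction N as [|N IH]; intros c K Hc Hzero.
  - simpl. rewrite Rmult_1_r, <- wsum_const.
    apply wsum_le; [apply (bounded_between _ 0 K) | apply bounded_const |]; apply Hc.
  - assert (Hb : bounded_seq c) by (apply (bounded_between _ 0 K); auto).
    rewrite wsum_shift, Hzero by (auto || lia).
    specialize (IH (fun k => c (S k)) K ltac:(intros; apply Hc)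
                   ltac:(intros; apply Hzero; lia)).
    simpl. lra.
Qed.

Lemma wsum_ge_term m : forall c, bounded_seq c -> (forall k, 0 <= c k) ->
  (/2) ^ m * c m <= wsum c.
Proof.
  induction m as [|m IH]; intros c Hb Hc; rewrite wsum_shift by auto; simpl.
  - pose proof (wsum_nonneg _ (bounded_shift _ Hb) (fun k => Hc (S k))). lra.
  - specialize (IH _ (bounded_shift _ Hb) (fun k => Hc (S k))).
    pose proof (Hc 0%nat). lra.
Qed.

Lemma half_pow_small e : 0 < e -> exists N, (/2) ^ N < e.
Proof.
  intros He. destruct (pow_lt_1_zero (/2) ltac:(rewrite Rabs_right; lra) e He) as [N HN].
  exists N. specialize (HN N (le_n N)).
  rewrite Rabs_right in HN by (left; apply half_pow_pos). exact HN.
Qed.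

Lemma common_radius (P : nat -> R -> Prop) N :
  (forall m d d', 0 < d' <= d -> P m d -> P m d') ->
  (forall m, exists d, 0 < d /\ P m d) ->
  exists d, 0 < d /\ forall m, (m < N)%nat -> P m d.
Proof.
  intros Hshrink Hex. induction N as [|N [d [Hd HP]]].
  - exists 1. split; [lra | intros; lia].
  - destruct (Hex N) as [dN [HdN HPN]].
    exists (Rmin d dN). split; [apply Rmin_glb_lt; auto|].
    pose proof (Rmin_l d dN). pose proof (Rmin_r d dN).
    assert (Hpos : 0 < Rmin d dN) by (apply Rmin_glb_lt; auto).
    intros m Hm. destruct (Nat.eq_dec m N) as [->|Hne].
    + apply (Hshrink N dN); [lra | auto].
    + apply (Hshrink m d); [lra | apply HP; lia].
Qed.

Definition Z_of_index (m : nat) : Z :=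
  if Nat.even m then Z.of_nat (Nat.div2 m) else (- Z.of_nat (S (Nat.div2 m)))%Z.

Lemma Z_of_index_surj n : exists m, Z_of_index m = n.
Proof.
  unfold Z_of_index. destruct (Z_le_gt_dec 0 n).
  - exists (2 * Z.to_nat n)%nat. rewrite Nat.even_mul, Nat.div2_double. simpl. lia.
  - exists (S (2 * Z.to_nat (- n - 1)))%nat.
    rewrite Nat.even_succ, Nat.odd_mul, Nat.div2_succ_double. simpl. lia.
Qed.

Definition open_arc (a b z : R) : Prop := exists j : Z, a + IZR j < z < b + IZR j.

Lemma open_arc_open a b : openT (open_arc a b).
Proof.
  split.
  - intros z. split; intros [j Hj].
    + exists (j + 1)%Z. rewrite plus_IZR. simpl. lra.
    + exists (j - 1)%Z. rewrite minus_IZR. simpl. lra.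
  - intros z [j Hj]. exists (Rmin (z - (a + IZR j)) (b + IZR j - z)).
    split; [apply Rmin_glb_lt; lra|].
    intros w Hw. apply Rabs_def2 in Hw.
    pose proof (Rmin_l (z - (a + IZR j)) (b + IZR j - z)).
    pose proof (Rmin_r (z - (a + IZR j)) (b + IZR j - z)). exists j. lra.
Qed.

Lemma open_arcs_disjoint c1 c2 z :
  c1 < c2 < c1 + 1 -> open_arc c1 c2 z -> open_arc c2 (c1 + 1) z -> False.
Proof.
  intros Hc [j1 Hj1] [j2 Hj2].
  assert (Hlt : IZR j2 < IZR j1) by lra. apply lt_IZR in Hlt.
  assert (Hle : IZR j1 < IZR j2 + 1) by lra. apply IZR_lt_add1 in Hle. lia.
Qed.

Lemma open_arcs_cover c1 c2 z :
  c1 < c2 < c1 + 1 -> ~ eqT z c1 -> ~ eqT z c2 -> open_arc c1 c2 z \/ open_arc c2 (c1 + 1) z.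
Proof.
  intros Hc Hz1 Hz2. set (j := Int_part (z - c1)).
  pose proof (Int_part_bounds (z - c1)) as Hj. fold j in Hj.
  assert (z <> c1 + IZR j) by (intro E; apply Hz1; exists j; lra).
  assert (z <> c2 + IZR j) by (intro E; apply Hz2; exists j; lra).
  destruct (Rlt_le_dec z (c2 + IZR j)); [left | right]; exists j; lra.
Qed.

Section Irrational.
Variable tau : R.
Hypothesis Htau : irrational tau.

Lemma multiple_not_one n k q :
  0 < IZR n * tau + IZR k < 1 -> (1 <= q)%Z -> IZR q * (IZR n * tau + IZR k) <> 1.
Proof.
  intros Hx Hq Heq. destruct (Z.eq_dec n 0) as [->|Hn].
  - rewrite Rmult_0_l, Rplus_0_l in Hx. destruct Hx as [Hk0 Hk1].
    apply lt_IZR in Hk0. apply (lt_IZR k 1) in Hk1. lia.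
  - apply Htau. exists (1 - q * k)%Z, (q * n)%Z. split; [nia|].
    assert (IZR q <> 0) by (intro E; apply eq_IZR in E; lia).
    assert (IZR n <> 0) by (intro E; apply eq_IZR in E; lia).
    rewrite minus_IZR, !mult_IZR.
    replace (IZR 1 - IZR q * IZR k) with (IZR q * IZR n * tau) by (simpl; nra).
    field. auto.
Qed.

(* The group [Z tau + Z] has positive elements below [2^-N]: given [x] in it,
   the remainder [r = 1 - q x] of [1] modulo [x] is in it and nonzero, and
   one of [r], [x - r] is at most [x / 2]. *)
Lemma small_element N :
  exists n k : Z, 0 < IZR n * tau + IZR k < 1 /\ IZR n * tau + IZR k <= (/2) ^ N.
Proof.
  induction N as [|N [n [k [Hx Hle]]]].
  - exists 1%Z, (- Int_part tau)%Z. pose proof (Int_part_bounds tau).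
    rewrite opp_IZR. simpl (IZR 1).
    assert (tau - IZR (Int_part tau) <> 0).
    { intro E. apply Htau. exists (Int_part tau), 1%Z. split; [lia|]. simpl. lra. }
    simpl. lra.
  - set (x := IZR n * tau + IZR k) in *.
    assert (Hinv : 1 < / x) by (rewrite <- Rinv_1; apply Rinv_lt_contravar; lra).
    set (q := Int_part (/ x)).
    assert (Hq1 : (1 <= q)%Z).
    { pose proof (Int_part_mono 1 (/ x) ltac:(lra)) as Hq. rewrite (Int_part_IZR 1) in Hq. exact Hq. }
    assert (Hqx : IZR q * x <= 1 < IZR q * x + x).
    { pose proof (Int_part_bounds (/ x)) as Hb. fold q in Hb.
      assert (x * / x = 1) by (field; lra). nra. }
    pose proof (multiple_not_one n k q Hx Hq1) as Hne. fold x in Hne.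
    set (r := 1 - IZR q * x).
    assert (Hr : 0 < r < x) by (unfold r; lra).
    simpl pow. destruct (Rle_dec r (x / 2)).
    + exists (- q * n)%Z, (1 - q * k)%Z.
      replace (IZR (- q * n) * tau + IZR (1 - q * k)) with r
        by (unfold r, x; rewrite minus_IZR, !mult_IZR, opp_IZR; simpl; ring).
      lra.
    + exists (n + q * n)%Z, (k - 1 + q * k)%Z.
      replace (IZR (n + q * n) * tau + IZR (k - 1 + q * k)) with (x - r)
        by (unfold r, x; rewrite !plus_IZR, minus_IZR, !mult_IZR; simpl; ring).
      lra.
Qed.

Lemma orbit_dense phi u v :
  u < v -> exists n k : Z, u < phi + IZR n * tau + IZR k < v.
Proof.
  intros Huv. destruct (half_pow_small (v - u) ltac:(lra)) as [N HN].
  destruct (small_element N) as [n [k [Hx Hle]]]. set (x := IZR n * tau + IZR k) in *.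
  set (j := (Int_part ((u - phi) / x) + 1)%Z).
  assert (Hj : u - phi < IZR j * x <= u - phi + x).
  { pose proof (Int_part_bounds ((u - phi) / x)).
    assert (Hdiv : (u - phi) / x * x = u - phi) by (field; lra).
    unfold j. rewrite plus_IZR. nra. }
  exists (j * n)%Z, (j * k)%Z. rewrite !mult_IZR.
  replace (phi + IZR j * IZR n * tau + IZR j * IZR k) with (phi + IZR j * x) by (unfold x; ring).
  lra.
Qed.

End Irrational.

Section Construction.
Variables phi tau : R.

Definition orbit (m : nat) : R := phi + IZR (Z_of_index m) * tau.

Section Lift.
(* [s] is one of the unit staircases [stepR], [stepL]. *)
Variable s : R -> R -> R.
Hypothesis s_per1 : forall d y, s d (y + 1) = s d y + 1.
Hypothesis s_half : forall d y,
  s d (y + /2) + s (d + /2) (y + /2) = s d y + s (d + /2) y + 1.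
Hypothesis s_bounds : forall d y, y - 2 <= s d y <= y + 2.

Definition pair_count (y : R) (m : nat) : R := s (orbit m) y + s (orbit m + /2) y.

(* The lift of the inverse of the Cantor function: a strictly increasing map
   of slope at least 1/2 jumping by [2^-m/8] at [orbit m + Z/2]. *)
Definition lift (y : R) : R := y / 2 + wsum (pair_count y) / 8.

Lemma pair_count_bounds y m : 2 * y - 4 <= pair_count y m <= 2 * y + 4.
Proof.
  unfold pair_count. pose proof (s_bounds (orbit m) y).
  pose proof (s_bounds (orbit m + /2) y). lra.
Qed.

Lemma pair_count_bounded y : bounded_seq (pair_count y).
Proof. apply (bounded_between _ (2 * y - 4) (2 * y + 4)), pair_count_bounds. Qed.

Lemma lift_translate y c :
  (forall m, pair_count (y + c) m = pair_count y m + 2 * c) -> lift (y + c) = lift y + c.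
Proof.
  intros Hc. unfold lift.
  rewrite (wsum_ext _ (fun m => pair_count y m + 2 * c)) by auto.
  rewrite <- wsum_plus by (apply pair_count_bounded || apply bounded_const).
  rewrite wsum_const. field.
Qed.

Lemma lift_per1 y : lift (y + 1) = lift y + 1.
Proof. apply lift_translate. intros m. unfold pair_count. rewrite !s_per1. ring. Qed.

Lemma lift_half y : lift (y + /2) = lift y + /2.
Proof. apply lift_translate. intros m. unfold pair_count. rewrite s_half. field. Qed.

Lemma lift_bounds y : y - 1 <= lift y <= y + 1.
Proof.
  unfold lift.
  cut (2 * (2 * y - 4) <= wsum (pair_count y) <= 2 * (2 * y + 4)); [lra|].
  rewrite <- (wsum_const (2 * y - 4)), <- (wsum_const (2 * y + 4)).
  split; apply wsum_le; try apply bounded_const; try apply pair_count_bounded;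
    intros m; apply pair_count_bounds.
Qed.

End Lift.

Lemma stepR_bounds2 d y : y - 2 <= stepR d y <= y + 2.
Proof. pose proof (stepR_bounds d y). lra. Qed.

Lemma stepL_bounds2 d y : y - 2 <= stepL d y <= y + 2.
Proof. pose proof (stepR_bounds d y). pose proof (stepL_le_stepR d y). lra. Qed.

Definition Hr : R -> R := lift stepR.
Definition Hl : R -> R := lift stepL.

Lemma bounded_R y : bounded_seq (pair_count stepR y).
Proof. apply pair_count_bounded, stepR_bounds2. Qed.

Lemma bounded_L y : bounded_seq (pair_count stepL y).
Proof. apply pair_count_bounded, stepL_bounds2. Qed.

Lemma Hr_per1 y : Hr (y + 1) = Hr y + 1.
Proof. apply lift_per1; [apply stepR_per1 | apply stepR_bounds2]. Qed.

Lemma Hl_per1 y : Hl (y + 1) = Hl y + 1.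
Proof. apply lift_per1; [apply stepL_per1 | apply stepL_bounds2]. Qed.

Lemma Hr_half y : Hr (y + /2) = Hr y + /2.
Proof. apply lift_half; [apply stepR_half | apply stepR_bounds2]. Qed.

Lemma Hl_half y : Hl (y + /2) = Hl y + /2.
Proof. apply lift_half; [apply stepL_half | apply stepL_bounds2]. Qed.

Lemma Hr_bounds y : y - 1 <= Hr y <= y + 1.
Proof. apply lift_bounds, stepR_bounds2. Qed.

Lemma Hr_Hl_gap y z : y < z -> Hr y + (z - y) / 2 <= Hl z.
Proof.
  intros Hyz. unfold Hr, Hl, lift.
  cut (wsum (pair_count stepR y) <= wsum (pair_count stepL z)); [lra|].
  apply wsum_le; [apply bounded_R | apply bounded_L |].
  intros m. unfold pair_count.
  pose proof (stepR_le_stepL (orbit m) y z Hyz).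
  pose proof (stepR_le_stepL (orbit m + /2) y z Hyz). lra.
Qed.

Lemma Hl_le_Hr y : Hl y <= Hr y <= Hl y + /2.
Proof.
  unfold Hr, Hl, lift.
  cut (0 <= wsum (pair_count stepR y) - wsum (pair_count stepL y) <= 4); [lra|].
  rewrite wsum_minus by (apply bounded_R || apply bounded_L).
  assert (Hdiff : forall m, 0 <= pair_count stepR y m - pair_count stepL y m <= 2).
  { intros m. unfold pair_count.
    pose proof (stepL_le_stepR (orbit m) y). pose proof (stepL_le_stepR (orbit m + /2) y).
    lra. }
  assert (Hb : bounded_seq (fun m => pair_count stepR y m - pair_count stepL y m))
    by (apply bounded_minus; [apply bounded_R | apply bounded_L]).
  split.
  - apply wsum_nonneg; [exact Hb | apply Hdiff].
  - replace 4 with (2 * 2) by ring. rewrite <- wsum_const.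
    apply wsum_le; [exact Hb | apply bounded_const | apply Hdiff].
Qed.

Lemma Hl_lt_Hr_orbit e m : eqT e (orbit m) \/ eqT e (orbit m + /2) -> Hl e < Hr e.
Proof.
  intros He. unfold Hr, Hl, lift.
  cut (0 < wsum (pair_count stepR e) - wsum (pair_count stepL e)); [lra|].
  rewrite wsum_minus by (apply bounded_R || apply bounded_L).
  assert (Hnn : forall k, 0 <= pair_count stepR e k - pair_count stepL e k).
  { intros k. unfold pair_count.
    pose proof (stepL_le_stepR (orbit k) e). pose proof (stepL_le_stepR (orbit k + /2) e).
    lra. }
  assert (Hjump : 1 <= pair_count stepR e m - pair_count stepL e m).
  { unfold pair_count.
    pose proof (stepL_le_stepR (orbit m) e). pose proof (stepL_le_stepR (orbit m + /2) e).
    destruct He as [He|He]; apply stepR_jump in He; lra. }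
  pose proof (wsum_ge_term m _ (bounded_minus _ _ (bounded_R e) (bounded_L e)) Hnn).
  pose proof (half_pow_pos m). nra.
Qed.

Lemma Hl_lt_Hr_only_orbit y :
  Hl y < Hr y -> exists m, eqT y (orbit m) \/ eqT y (orbit m + /2).
Proof.
  intros Hjump. apply NNPP. intros Hno. cut (Hr y = Hl y); [lra|].
  unfold Hr, Hl, lift. f_equal. f_equal. apply wsum_ext. intros m. unfold pair_count.
  rewrite (stepR_eq_stepL (orbit m) y), (stepR_eq_stepL (orbit m + /2) y);
    [reflexivity | intro; apply Hno; exists m; auto ..].
Qed.

(* [Hr] is right-continuous (only the upper estimate is needed). *)
Lemma Hr_right_cont y e :
  0 < e -> exists d, 0 < d /\ forall z, y <= z < y + d -> Hr z <= Hr y + e.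
Proof.
  intros He. destruct (half_pow_small e He) as [N HN].
  destruct (common_radius
              (fun m d => forall z, y <= z < y + d ->
                 pair_count stepR z m = pair_count stepR y m) N)
    as [d [Hd Hconst]].
  { intros m d d' Hdd' HP z Hz. apply HP. lra. }
  { intros m. destruct (stepR_right_const (orbit m) y) as [d1 [Hd1 H1]].
    destruct (stepR_right_const (orbit m + /2) y) as [d2 [Hd2 H2]].
    exists (Rmin d1 d2). split; [apply Rmin_glb_lt; auto|].
    pose proof (Rmin_l d1 d2). pose proof (Rmin_r d1 d2).
    intros z Hz. unfold pair_count. rewrite H1, H2 by lra. reflexivity. }
  exists (Rmin d (Rmin e 1)).
  assert (Hmin : 0 < Rmin d (Rmin e 1) <= d /\ Rmin d (Rmin e 1) <= e /\ Rmin d (Rmin e 1) <= 1).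
  { pose proof (Rmin_l d (Rmin e 1)). pose proof (Rmin_r d (Rmin e 1)).
    pose proof (Rmin_l e 1). pose proof (Rmin_r e 1).
    repeat split; try lra. repeat apply Rmin_glb_lt; lra. }
  split; [lra|].
  intros z Hz. unfold Hr, lift.
  assert (Htail : wsum (pair_count stepR z) - wsum (pair_count stepR y) <= 2 * 2 * (/2) ^ N).
  { rewrite wsum_minus by apply bounded_R. apply wsum_tail.
    - intros m. unfold pair_count.
      pose proof (stepR_incr (orbit m) y z ltac:(lra)).
      pose proof (stepR_incr (orbit m + /2) y z ltac:(lra)). lra.
    - intros m Hm. rewrite (Hconst m Hm z) by lra. ring. }
  lra.
Qed.

(* [Hl] is left-continuous (only the lower estimate is needed). *)
Lemma Hl_left_cont y e :
  0 < e -> exists d, 0 < d /\ forall z, y - d < z <= y -> Hl y - e <= Hl z.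
Proof.
  intros He. destruct (half_pow_small e He) as [N HN].
  destruct (common_radius
              (fun m d => forall z, y - d < z <= y ->
                 pair_count stepL z m = pair_count stepL y m) N)
    as [d [Hd Hconst]].
  { intros m d d' Hdd' HP z Hz. apply HP. lra. }
  { intros m. destruct (stepL_left_const (orbit m) y) as [d1 [Hd1 H1]].
    destruct (stepL_left_const (orbit m + /2) y) as [d2 [Hd2 H2]].
    exists (Rmin d1 d2). split; [apply Rmin_glb_lt; auto|].
    pose proof (Rmin_l d1 d2). pose proof (Rmin_r d1 d2).
    intros z Hz. unfold pair_count. rewrite H1, H2 by lra. reflexivity. }
  exists (Rmin d (Rmin e 1)).
  assert (Hmin : 0 < Rmin d (Rmin e 1) <= d /\ Rmin d (Rmin e 1) <= e /\ Rmin d (Rmin e 1) <= 1).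
  { pose proof (Rmin_l d (Rmin e 1)). pose proof (Rmin_r d (Rmin e 1)).
    pose proof (Rmin_l e 1). pose proof (Rmin_r e 1).
    repeat split; try lra. repeat apply Rmin_glb_lt; lra. }
  split; [lra|].
  intros z Hz. unfold Hl, lift.
  assert (Htail : wsum (pair_count stepL y) - wsum (pair_count stepL z) <= 2 * 2 * (/2) ^ N).
  { rewrite wsum_minus by apply bounded_L. apply wsum_tail.
    - intros m. unfold pair_count.
      pose proof (stepL_incr (orbit m) y z ltac:(lra)).
      pose proof (stepL_incr (orbit m + /2) y z ltac:(lra)). lra.
    - intros m Hm. rewrite (Hconst m Hm z) by lra. ring. }
  lra.
Qed.


Hypothesis Htau : irrational tau.

Lemma orbit_point_between u v : u < v -> exists e m, u < e < v /\ eqT e (orbit m).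
Proof.
  intros Huv. destruct (orbit_dense tau Htau phi u v Huv) as [n [k Hk]].
  destruct (Z_of_index_surj n) as [m Hm].
  exists (orbit m + IZR k), m. unfold orbit. rewrite Hm. split; [lra|].
  exists k. ring.
Qed.

Definition below (x y : R) : Prop := Hr y <= x.

Lemma below_bound x : bound (below x).
Proof. exists (x + 1). intros y Hy. unfold below in Hy. pose proof (Hr_bounds y). lra. Qed.

Lemma below_nonempty x : exists y, below x y.
Proof. exists (x - 1). unfold below. pose proof (Hr_bounds (x - 1)). lra. Qed.

Definition F (x : R) : R :=
  proj1_sig (completeness (below x) (below_bound x) (below_nonempty x)).

Lemma F_lub x : is_lub (below x) (F x).
Proof. unfold F. destruct completeness as [s Hs]. exact Hs. Qed.

Lemma F_upper x y : Hr y <= x -> y <= F x.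
Proof. intros Hy. apply (proj1 (F_lub x)). exact Hy. Qed.

Lemma F_in_jump x : Hl (F x) <= x <= Hr (F x).
Proof.
  set (s := F x). split; apply NNPP; intros Hn; apply Rnot_le_lt in Hn.
  - destruct (Hl_left_cont s ((Hl s - x) / 2) ltac:(lra)) as [d [Hd Hleft]].
    assert (Hub : is_upper_bound (below x) (s - d)).
    { intros y Hy. unfold below in Hy. destruct (Rle_dec y (s - d)) as [|Hgt]; [assumption|].
      exfalso. assert (y <= s) by (apply (proj1 (F_lub x)); exact Hy).
      specialize (Hleft y ltac:(lra)). pose proof (Hl_le_Hr y). lra. }
    pose proof (proj2 (F_lub x) _ Hub) as Hs. fold s in Hs. lra.
  - destruct (Hr_right_cont s (x - Hr s) ltac:(lra)) as [d [Hd Hright]].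
    specialize (Hright (s + d / 2) ltac:(lra)).
    pose proof (F_upper x (s + d / 2) ltac:(lra)) as Hs. fold s in Hs. lra.
Qed.

Lemma F_unique x y : Hl y <= x <= Hr y -> F x = y.
Proof.
  intros Hxy. apply Rle_antisym.
  - apply (proj2 (F_lub x)). intros z Hz. unfold below in Hz.
    destruct (Rle_dec z y) as [|Hgt]; [assumption|]. exfalso.
    pose proof (Hr_Hl_gap y z ltac:(lra)). pose proof (Hl_le_Hr z). lra.
  - apply NNPP. intros Hn. apply Rnot_le_lt in Hn.
    pose proof (Hr_Hl_gap ((F x + y) / 2) y ltac:(lra)).
    pose proof (F_upper x ((F x + y) / 2) ltac:(lra)). lra.
Qed.

Lemma F_Hr y : F (Hr y) = y.
Proof. apply F_unique. pose proof (Hl_le_Hr y). lra. Qed.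

Lemma F_Hl y : F (Hl y) = y.
Proof. apply F_unique. pose proof (Hl_le_Hr y). lra. Qed.

Lemma F_mono x1 x2 : x1 <= x2 -> F x1 <= F x2.
Proof.
  intros Hx. destruct (Rle_dec (F x1) (F x2)) as [|Hgt]; [assumption|]. exfalso.
  pose proof (F_in_jump x1). pose proof (F_in_jump x2).
  pose proof (Hr_Hl_gap (F x2) (F x1) ltac:(lra)). lra.
Qed.

(* Since the lift has slope at least 1/2, [F] is 2-Lipschitz. *)
Lemma F_lipschitz x1 x2 : x1 <= x2 -> F x2 - F x1 <= 2 * (x2 - x1).
Proof.
  intros Hx. pose proof (F_mono x1 x2 Hx). destruct (Req_dec (F x1) (F x2)); [lra|].
  pose proof (F_in_jump x1). pose proof (F_in_jump x2).
  pose proof (Hr_Hl_gap (F x1) (F x2) ltac:(lra)). lra.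
Qed.

Lemma F_continuous : continuity F.
Proof.
  intros x e He. exists (e / 2). split; [lra|].
  intros x' [_ Hx']. simpl in *. unfold R_dist in *.
  destruct (Rle_dec x x') as [Hle|Hgt].
  - pose proof (F_lipschitz x x' Hle). pose proof (F_mono x x' Hle).
    rewrite Rabs_right in Hx' |- *; lra.
  - pose proof (F_lipschitz x' x ltac:(lra)). pose proof (F_mono x' x ltac:(lra)).
    rewrite Rabs_left1 in Hx' |- *; lra.
Qed.

Lemma F_per1 x : F (x + 1) = F x + 1.
Proof. apply F_unique. rewrite Hr_per1, Hl_per1. pose proof (F_in_jump x). lra. Qed.

Lemma F_half x : F (x + /2) = F x + /2.
Proof. apply F_unique. rewrite Hr_half, Hl_half. pose proof (F_in_jump x). lra. Qed.

Lemma F_translate k x : F (x + IZR k) = F x + IZR k.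
Proof. apply translate_Z, F_per1. Qed.

(* The Cantor set: the closure of the range of the lift, i.e. the endpoints
   of all jump intervals. *)
Definition Cset (x : R) : Prop := exists y, x = Hr y \/ x = Hl y.

Lemma Cset_char x : Cset x <-> x = Hr (F x) \/ x = Hl (F x).
Proof.
  split.
  - intros [y [->| ->]]; [rewrite F_Hr | rewrite F_Hl]; auto.
  - intros Hx. exists (F x). exact Hx.
Qed.

Lemma jump_interior_not_C y x : Hl y < x < Hr y -> ~ Cset x.
Proof.
  intros Hx HC. apply Cset_char in HC. rewrite (F_unique x y) in HC by lra. lra.
Qed.

Lemma Cset_translate k x : Cset x -> Cset (x + IZR k).
Proof.
  intros [y [->| ->]]; exists (y + IZR k);
    [left; rewrite (translate_Z Hr Hr_per1) | right; rewrite (translate_Z Hl Hl_per1)];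
    reflexivity.
Qed.

Lemma Cset_periodic : periodic Cset.
Proof.
  intros x. split; intros Hx.
  - replace (x + 1) with (x + IZR 1) by (simpl; ring). apply Cset_translate, Hx.
  - replace x with (x + 1 + IZR (-1)) by (simpl; ring). apply Cset_translate, Hx.
Qed.

Lemma Cset_half x : Cset x <-> Cset (x + /2).
Proof.
  split.
  - intros [y [->| ->]]; exists (y + /2); [left; rewrite Hr_half | right; rewrite Hl_half];
      reflexivity.
  - intros [y [Hy|Hy]]; exists (y - /2).
    + left. pose proof (Hr_half (y - /2)) as Hh. replace (y - /2 + /2) with y in Hh by ring. lra.
    + right. pose proof (Hl_half (y - /2)) as Hh. replace (y - /2 + /2) with y in Hh by ring. lra.
Qed.

(* Between two points of [Cset] there is a point outside it: either they bound
   one jump interval, or by density an orbit point lies between their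
   [F]-images and its jump interval lies between them. *)
Lemma not_C_between a b : a < b -> Cset a -> Cset b -> exists c, a < c < b /\ ~ Cset c.
Proof.
  intros Hab Ca Cb. pose proof (F_mono a b ltac:(lra)).
  pose proof (F_in_jump a). pose proof (F_in_jump b).
  pose proof (Hl_le_Hr (F a)). pose proof (Hl_le_Hr (F b)).
  destruct (Req_dec (F a) (F b)) as [E|E].
  - apply Cset_char in Ca. apply Cset_char in Cb. rewrite <- E in Cb.
    assert (a = Hl (F a) /\ b = Hr (F a)) by (destruct Ca, Cb; lra).
    exists ((a + b) / 2). split; [lra|]. apply (jump_interior_not_C (F a)). lra.
  - destruct (orbit_point_between (F a) (F b) ltac:(lra)) as [e [m [He Horb]]].
    pose proof (Hl_lt_Hr_orbit e m (or_introl Horb)).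
    pose proof (Hr_Hl_gap (F a) e ltac:(lra)). pose proof (Hr_Hl_gap e (F b) ltac:(lra)).
    exists ((Hl e + Hr e) / 2). split; [lra|]. apply (jump_interior_not_C e). lra.
Qed.

Lemma Cset_closed : closedT Cset.
Proof.
  split; [exact Cset_periodic|].
  intros x Hx. apply NNPP. intros nC.
  pose proof (F_in_jump x). set (s := F x) in *.
  assert (Hin : Hl s < x < Hr s).
  { assert (x <> Hr s) by (intro; apply nC; exists s; auto).
    assert (x <> Hl s) by (intro; apply nC; exists s; auto). lra. }
  assert (Hpos : Rmin (x - Hl s) (Hr s - x) > 0) by (apply Rmin_glb_lt; lra).
  destruct (Hx _ Hpos) as [y [Cy Hy]]. apply Rabs_def2 in Hy.
  pose proof (Rmin_l (x - Hl s) (Hr s - x)). pose proof (Rmin_r (x - Hl s) (Hr s - x)).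
  apply (jump_interior_not_C s y); [lra | exact Cy].
Qed.

Lemma distT_small x y : Rabs (x - y) < /2 -> distT x y = Rabs (x - y).
Proof.
  intros Hxy. apply Rabs_def2 in Hxy. unfold distT.
  rewrite (Int_part_unique (x - y + /2) 0) by (simpl; lra). simpl. f_equal. ring.
Qed.

(* Points [Hr z] with [z] slightly right of [s] accumulate at [Hr s], and
   points [Hr z] with [z] slightly left of [s] accumulate at [Hl s]. *)
Lemma Cset_perfect : perfectT Cset.
Proof.
  intros x Cx e He. set (e' := Rmin e (/2) / 2).
  assert (He' : 0 < e' < e /\ e' < /2).
  { unfold e'. pose proof (Rmin_l e (/2)). pose proof (Rmin_r e (/2)).
    assert (0 < Rmin e (/2)) by (apply Rmin_glb_lt; lra). lra. }
  destruct Cx as [s [->| ->]].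
  - destruct (Hr_right_cont s e' ltac:(lra)) as [d [Hd Hright]].
    specialize (Hright (s + d / 2) ltac:(lra)).
    pose proof (Hr_Hl_gap s (s + d / 2) ltac:(lra)). pose proof (Hl_le_Hr (s + d / 2)).
    exists (Hr (s + d / 2)). split; [exists (s + d / 2); auto|].
    rewrite distT_small; rewrite Rabs_left; try split; lra.
  - destruct (Hl_left_cont s e' ltac:(lra)) as [d [Hd Hleft]].
    specialize (Hleft (s - d / 2) ltac:(lra)).
    pose proof (Hr_Hl_gap (s - d / 2) s ltac:(lra)). pose proof (Hl_le_Hr (s - d / 2)).
    exists (Hr (s - d / 2)). split; [exists (s - d / 2); auto|].
    rewrite distT_small; rewrite Rabs_right; try split; lra.
Qed.

Lemma Cset_eqT x y : Cset x -> eqT y x -> Cset y.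
Proof. intros Cx [k Hk]. replace y with (x + IZR k) by lra. apply Cset_translate, Cx. Qed.

(* Two points of a connected subset of [Cset] coincide in T: otherwise two
   points outside [Cset], one on each arc between them, cut the subset. *)
Lemma Cset_totally_disconnected : totally_disconnectedT Cset.
Proof.
  intros S HSC Hconn x y Sx Sy. apply NNPP. intros Hne.
  destruct (integer_translate x y) as [k Hk].
  assert (Hy' : x < y + IZR k < x + 1).
  { assert (y + IZR k <> x) by (intro E; apply Hne; exists k; lra).
    lra. }
  assert (Cy' : Cset (y + IZR k)) by (apply Cset_translate, HSC, Sy).
  assert (Cx1 : Cset (x + 1)) by (apply (Cset_periodic x), HSC, Sx).
  destruct (not_C_between x (y + IZR k) ltac:(lra) (HSC x Sx) Cy') as [c1 [Hc1 nC1]].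
  destruct (not_C_between (y + IZR k) (x + 1) ltac:(lra) Cy' Cx1) as [c2 [Hc2 nC2]].
  assert (Hc : c1 < c2 < c1 + 1) by lra.
  assert (Hcover : forall z, S z -> open_arc c1 c2 z \/ open_arc c2 (c1 + 1) z).
  { intros z Sz. apply open_arcs_cover; [exact Hc | ..];
      intro E; [apply nC1 | apply nC2]; apply (Cset_eqT z); auto using eqT_sym. }
  destruct (Hconn _ _ (open_arc_open c1 c2) (open_arc_open c2 (c1 + 1)) Hcover
              (fun z _ => open_arcs_disjoint c1 c2 z Hc)) as [HU|HV].
  - apply (open_arcs_disjoint c1 c2 x Hc); [apply HU, Sx|]. exists (-1)%Z. simpl. lra.
  - apply (open_arcs_disjoint c1 c2 y Hc); [|apply HV, Sy]. exists (- k)%Z.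
    rewrite opp_IZR. lra.
Qed.

Lemma gap_is_jump a b : gap Cset a b -> F a = F b /\ a = Hl (F a) /\ b = Hr (F a).
Proof.
  intros [Hab [Ca [Cb Hno]]].
  assert (E : F a = F b).
  { pose proof (F_mono a b ltac:(lra)). destruct (Req_dec (F a) (F b)) as [|Hne]; [assumption|].
    exfalso. pose proof (F_in_jump a). pose proof (F_in_jump b).
    assert (Hmid : exists t, F a < t < F b) by (exists ((F a + F b) / 2); lra).
    destruct Hmid as [t Ht].
    pose proof (Hr_Hl_gap (F a) t ltac:(lra)).
    pose proof (Hr_Hl_gap t (F b) ltac:(lra)).
    pose proof (Hl_le_Hr t).
    apply (Hno (Hr t)); [lra | exists t; auto]. }
  split; [exact E|].
  apply Cset_char in Ca. apply Cset_char in Cb. rewrite <- E in Cb.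
  pose proof (Hl_le_Hr (F a)). destruct Ca, Cb; lra.
Qed.

Lemma jump_is_gap s : Hl s < Hr s -> gap Cset (Hl s) (Hr s).
Proof.
  intros Hs. pose proof (Hl_le_Hr s).
  split; [lra|]. split; [exists s; auto|]. split; [exists s; auto|].
  intros x Hx. apply (jump_interior_not_C s x Hx).
Qed.

Lemma F_const_gap a b x : gap Cset a b -> a <= x <= b -> F x = F a.
Proof.
  intros Hg Hx. destruct (gap_is_jump a b Hg) as [E _].
  apply Rle_antisym; [rewrite E|]; apply F_mono; lra.
Qed.

Lemma F_fibres x y : eqT (F x) (F y) <-> simC Cset x y.
Proof.
  split.
  - intros [k Hk]. set (s := F x).
    assert (Ey : F (y + IZR k) = s) by (rewrite F_translate; unfold s; lra).
    pose proof (F_in_jump x) as Jx. pose proof (F_in_jump (y + IZR k)) as Jy.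
    rewrite Ey in Jy. fold s in Jx.
    destruct (Req_dec (Hl s) (Hr s)) as [Eq|Ne].
    + left. exists k. lra.
    + right. exists (Hl s), (Hr s). pose proof (Hl_le_Hr s).
      split; [apply jump_is_gap; lra|]. split; [exists 0%Z; simpl; lra | exists k; lra].
  - intros [[k Hk] | [a [b [Hg [[k Hk] [j Hj]]]]]].
    + exists k. replace x with (y + IZR k) by lra. rewrite F_translate. ring.
    + pose proof (F_const_gap a b (x + IZR k) Hg Hk) as Ex.
      pose proof (F_const_gap a b (y + IZR j) Hg Hj) as Ey.
      rewrite !F_translate in *. exists (j - k)%Z. rewrite minus_IZR. lra.
Qed.

Lemma F_cantor_function : cantor_function Cset F.
Proof.
  split; [|exact F_fibres].
  split; [exact F_continuous|]. split; [exact F_mono | exact F_per1].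
Qed.

Lemma F_accessible y :
  (exists x, accessible Cset x /\ eqT (F x) y) <->
  (exists m, eqT y (orbit m) \/ eqT y (orbit m + /2)).
Proof.
  split.
  - intros [x [[a [b [Hg Hx]]] Hy]]. destruct (gap_is_jump a b Hg) as [E [Ea Eb]].
    destruct Hg as [Hab _].
    destruct (Hl_lt_Hr_only_orbit (F a) ltac:(lra)) as [m Hm].
    assert (Hxa : eqT (F x) (F a)).
    { destruct Hx as [[k Hk]|[k Hk]]; exists k.
      - replace x with (a + IZR k) by lra. rewrite F_translate. ring.
      - replace x with (b + IZR k) by lra. rewrite F_translate, <- E. ring. }
    exists m. destruct Hm as [Hm|Hm]; [left | right];
      apply (eqT_trans _ _ _ (eqT_sym _ _ Hy)), (eqT_trans _ _ _ Hxa), Hm.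
  - intros [m Hm].
    assert (Hjump : forall e, eqT e (orbit m) \/ eqT e (orbit m + /2) -> eqT y e ->
              exists x, accessible Cset x /\ eqT (F x) y).
    { intros e He Hye. exists (Hl e). split.
      - exists (Hl e), (Hr e). split; [apply jump_is_gap, (Hl_lt_Hr_orbit e m He)|].
        left. apply eqT_refl.
      - rewrite F_Hl. apply eqT_sym, Hye. }
    destruct Hm as [Hm|Hm]; [apply (Hjump (orbit m)) | apply (Hjump (orbit m + /2))];
      auto using eqT_refl.
Qed.

End Construction.

Theorem lemma3p2 (tau phi : R) (Htau : irrational tau) :
  exists (C : R -> Prop) (F : R -> R),
    cantor_set C /\
    (forall x, C x <-> C (x + /2)) /\
    cantor_function C F /\
    (forall y, (exists x, accessible C x /\ eqT (F x) y) <->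
               (exists n : Z, eqT y (phi + IZR n * tau) \/
                              eqT y ((phi + /2) + IZR n * tau))) /\
    (forall x, eqT (F (x + /2)) (F x + /2)).
Proof.
  exists (Cset phi tau), (F phi tau).
  split; [|split; [|split; [|split]]].
  - split; [apply Cset_closed|]. split; [exists (Hr phi tau 0), 0; auto|].
    split; [exact (Cset_totally_disconnected phi tau Htau) | apply Cset_perfect].
  - apply Cset_half.
  - apply F_cantor_function.
  - intros y. rewrite F_accessible. split.
    + intros [m Hm]. exists (Z_of_index m). unfold orbit in Hm.
      replace (phi + /2 + IZR (Z_of_index m) * tau)
        with (phi + IZR (Z_of_index m) * tau + /2) by ring. exact Hm.
    + intros [n Hn]. destruct (Z_of_index_surj n) as [m <-]. exists m. unfold orbit.
      replace (phi + IZR (Z_of_index m) * tau + /2)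
        with (phi + /2 + IZR (Z_of_index m) * tau) by ring. exact Hn.
  - intros x. rewrite F_half. apply eqT_refl.
Qed.
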